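(* Let $H$ be a 0-SYM filter such that: - $\operatorname{sign}(H(i))=1$; - the set of solutions of $H(z)=1$ lying on the unit circle $\{|z|=1\}$ is exactly $\{1\}$. Then $H(e^{i\xi})>0$ for all $\xi\in(-\pi,\pi)$.
   Context: A 0-SYM filter is a rational function $H(z)$ with real coefficients satisfying $H(z)^2+H(-z)^2=1$ and $H(z)=H(z^{-1})$. For such $H$ one has $H(i)=\pm1/\sqrt2$. *)

From HB Require Import structures.
From mathcomp Require Import all_boot all_order all_algebra.
From mathcomp Require Import all_classical all_reals all_analysis.
From mathcomp Require Import complex.
Set Implicit Arguments. Unset Strict Implicit. Unset Printing Implicit Defensive.
Import Order.TTheory GRing.Theory Num.Theory.
Local Open Scope ring_scope.

(* A rational function with real coefficients, given in reduced form p/q,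
   evaluated at a complex point z (value p(z)/q(z); it is only meaningful
   when q(z) <> 0). *)
Definition ratf_eval (R : realType) (p q : {poly R}) (z : R[i]) : R[i] :=
  (map_poly (real_complex R) p).[z] / (map_poly (real_complex R) q).[z].

Definition ratf_dom (R : realType) (q : {poly R}) (z : R[i]) : Prop :=
  (map_poly (real_complex R) q).[z] != 0.

(* 0-SYM filter: H(z)^2 + H(-z)^2 = 1 and H(z) = H(z^-1), as identities of
   rational functions; for p/q in lowest terms (q <> 0, coprime p q) this is
   equivalent to the identities holding at every point where both sides are
   defined. *)
Definition zero_sym (R : realType) (p q : {poly R}) : Prop :=
  [/\ q != 0, coprimep p q,
      (forall z : R[i], ratf_dom q z -> ratf_dom q (- z) ->
         ratf_eval p q z ^+ 2 + ratf_eval p q (- z) ^+ 2 = 1) &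
      (forall z : R[i], z != 0 -> ratf_dom q z -> ratf_dom q z^-1 ->
         ratf_eval p q z = ratf_eval p q z^-1)].

Definition expi (R : realType) (xi : R) : R[i] := (cos xi +i* sin xi)%C.

(* On the unit circle H is real: H(z) = H(1/z) = H(conj z) = conj (H z) for
   |z| = 1, since p and q have real coefficients.  The identity
   H(z)^2 + H(-z)^2 = 1 then gives |p| <= |q| at every point of the circle where
   q(z) q(-z) <> 0, i.e. everywhere but at finitely many points; near a zero of q
   (which is not a zero of p) we would have |p| > |q|, so q has no zero on the
   circle.  Hence h(t) := H(e^{it}) is real, even and continuous, with
   h(t)^2 + h(t - pi)^2 = 1.  For 0 < t < pi neither e^{it} nor e^{i(t - pi)}
   is 1, so neither term equals 1, which excludes h(t) + h(t - pi) = 1 (with the sum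
   of squares it would force one term to be 0 and the other 1).  At
   t = pi/2 both terms equal H(i) > 0, so the sum is sqrt 2 > 1; by the
   intermediate value theorem the sum exceeds 1 on all of (0, pi), which
   forces h(t) > 0 there; evenness covers (-pi, 0) and H(1) = 1. *)

From HB Require Import structures.
From mathcomp Require Import all_boot all_order all_algebra.
From mathcomp Require Import all_classical all_reals all_analysis.
From mathcomp Require Import complex.
From mathcomp Require Import ring lra.
Set Implicit Arguments. Unset Strict Implicit. Unset Printing Implicit Defensive.
Import Order.TTheory GRing.Theory Num.Theory.
Import numFieldNormedType.Exports.
Local Open Scope ring_scope.
Local Open Scope complex_scope.
Local Notation Re := (@complex.Re _).
Local Notation Im := (@complex.Im _).

Section ComplexArithmetic.
Variable R : rcfType.
Implicit Types (a b w : R[i]) (x : R).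

Lemma ReD a b : Re (a + b) = Re a + Re b. Proof. by case: a => ? ?; case: b. Qed.
Lemma ImD a b : Im (a + b) = Im a + Im b. Proof. by case: a => ? ?; case: b. Qed.
Lemma ReM a b : Re (a * b) = Re a * Re b - Im a * Im b.
Proof. by case: a => ? ?; case: b. Qed.
Lemma ImM a b : Im (a * b) = Re a * Im b + Im a * Re b.
Proof. by case: a => ? ?; case: b. Qed.

Definition sqnormc a : R := Re a ^+ 2 + Im a ^+ 2.

Lemma sqnormcM a b : sqnormc (a * b) = sqnormc a * sqnormc b.
Proof. by rewrite /sqnormc ReM ImM; ring. Qed.

Lemma sqnormc_real x : sqnormc x%:C = x ^+ 2.
Proof. by rewrite /sqnormc /= expr0n addr0. Qed.

Lemma sqnormc_ge0 a : 0 <= sqnormc a.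
Proof. by rewrite addr_ge0 ?sqr_ge0. Qed.

Lemma sqnormc_gt0 a : a != 0 -> 0 < sqnormc a.
Proof.
case: a => a1 a2 a0; rewrite /sqnormc /= lt_def addr_ge0 ?sqr_ge0 // andbT.
rewrite paddr_eq0 ?sqr_ge0 // !sqrf_eq0.
by apply: contra a0 => /andP[/eqP-> /eqP->].
Qed.

Lemma Re_div a b : Re (a / b) = (Re a * Re b + Im a * Im b) / sqnormc b.
Proof. by case: a => a1 a2; case: b => b1 b2; rewrite /sqnormc /=; ring. Qed.

Lemma conjc_eq_real a : a^* = a -> a = (Re a)%:C.
Proof.
by case: a => a1 a2 /= [] h; apply/eqP; rewrite eq_complex /= eqxx /=; apply/eqP; lra.
Qed.

Lemma invc_unit_norm w : w * w^* = 1 -> w^-1 = w^*.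
Proof.
move=> ww; have w0 : w != 0.
  by apply: contra_eq_neq ww => ->; rewrite mul0r eq_sym oner_neq0.
by apply: (mulfI w0); rewrite divff.
Qed.

Lemma sg_realc_eq1 x : (Num.sg x%:C == 1) = (0 < x).
Proof.
rewrite sgr_def ltcR.
have [x0|x0|->] := ltrgtP x 0; last by rewrite eqxx /= eq_sym oner_eq0.
  have xC0 : x%:C != 0 by rewrite eq_complex /= (lt_eqF x0).
  by rewrite xC0 expr1 mulr1n eq_sym -addr_eq0 (_ : 1 + 1 = 2%:R) // pnatr_eq0.
have xC0 : x%:C != 0 by rewrite eq_complex /= (gt_eqF x0).
by rewrite xC0 expr0 mulr1n eqxx.
Qed.

Lemma conjc_horner (p : {poly R}) w :
  (map_poly (real_complex R) p).[w]^* = (map_poly (real_complex R) p).[w^*].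
Proof.
rewrite -horner_map /= -map_poly_comp; congr (_.[_]).
by apply: eq_map_poly => x /=; exact: conjc_real.
Qed.

End ComplexArithmetic.

Section UnitCircle.
Variable R : realType.
Implicit Types (s t : R).

Lemma expi0 : expi 0 = 1 :> R[i].
Proof. by rewrite /expi cos0 sin0. Qed.

Lemma expi_pihalf : expi (pi / 2) = 'i :> R[i].
Proof. by rewrite /expi cos_pihalf sin_pihalf. Qed.

Lemma expiDpi t : expi (t + pi) = - expi t.
Proof. by apply/eqP; rewrite eq_complex /= cosDpi sinDpi !eqxx. Qed.

Lemma conjc_expi t : (expi t)^* = expi (- t).
Proof. by apply/eqP; rewrite eq_complex /= cosN sinN !eqxx. Qed.

Lemma expi_mul_conjc t : expi t * (expi t)^* = 1.
Proof.
apply/eqP; rewrite eq_complex /= mulrN opprK -!expr2 cos2Dsin2 eqxx /=.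
by rewrite mulrN mulrC addNr.
Qed.

Lemma normc_expi t : `|expi t| = 1.
Proof. by rewrite normcE expi_mul_conjc sqrtc1. Qed.

Lemma expi_neq s t : 0 < t - s < pi -> expi t != expi s.
Proof.
move=> hst; apply/eqP => -[ct st].
by have := sin_gt0_pi hst; rewrite sinB ct st [X in X - _]mulrC subrr ltxx.
Qed.

Lemma continuous_horner (P : {poly R[i]}) (w : R -> R[i]) :
    continuous (fun t => Re (w t)) -> continuous (fun t => Im (w t)) ->
  continuous (fun t => Re P.[w t]) /\ continuous (fun t => Im P.[w t]).
Proof.
move=> cRe cIm; elim/poly_ind: P => [|P c [IHRe IHIm]].
  by split=> t; under eq_fun do rewrite horner0; exact: cvg_cst.
have -> : (fun t => Re (P * 'X + c%:P).[w t]) =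
    (fun t => Re P.[w t] * Re (w t) - Im P.[w t] * Im (w t) + Re c).
  by apply: funext => t; rewrite hornerMXaddC ReD ReM.
have -> : (fun t => Im (P * 'X + c%:P).[w t]) =
    (fun t => Re P.[w t] * Im (w t) + Im P.[w t] * Re (w t) + Im c).
  by apply: funext => t; rewrite hornerMXaddC ImD ImM.
split=> t; apply: cvgD; try exact: cvg_cst.
- by apply: cvgB; apply: cvgM; [exact: IHRe | exact: cRe | exact: IHIm | exact: cIm].
- by apply: cvgD; apply: cvgM; [exact: IHRe | exact: cIm | exact: IHIm | exact: cRe].
Qed.

Lemma continuous_horner_expi (P : {poly R[i]}) :
  continuous (fun t => Re P.[expi t]) /\ continuous (fun t => Im P.[expi t]).
Proof. by apply: continuous_horner; [exact: continuous_cos | exact: continuous_sin]. Qed.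

Lemma continuous_sqnormc_horner_expi (P : {poly R[i]}) :
  continuous (fun t => sqnormc P.[expi t]).
Proof.
have [cRe cIm] := continuous_horner_expi P.
rewrite /sqnormc => t; under eq_fun do rewrite !expr2.
by apply: cvgD; apply: cvgM; [exact: cRe | exact: cRe | exact: cIm | exact: cIm].
Qed.

Lemma poly_expi_nonroot (P : {poly R[i]}) a e : P != 0 -> 0 < e ->
  exists2 t, a <= t < a + e & ~~ root P (expi t).
Proof.
move=> P0 e0; apply: contrapT => noroot.
have allroot t : a <= t < a + e -> root P (expi t).
  by move=> ht; apply/negPn/negP => nr; apply: noroot; exists t.
pose N := size P; pose m := Num.min e 1.
have m0 : 0 < m by rewrite lt_min e0 ltr01.
have [me m1] : m <= e /\ m <= 1 by split; rewrite ge_min lexx ?orbT.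
pose d := m / N.+1%:R.
have d0 : 0 < d by rewrite divr_gt0 // ltr0n.
have dN : d * N.+1%:R = m by rewrite /d divfK ?pnatr_eq0.
have pi2 := pi_ge2 R.
pose rs := [seq expi (a + d * k%:R) | k <- iota 0 N.+1].
have rs_root : all (root P) rs.
  apply/allP => w /mapP[k]; rewrite mem_iota add0n => /andP[_ kN] ->.
  have : d * k%:R < d * N.+1%:R by rewrite ltr_pM2l // ltr_nat.
  by rewrite dN => dk; apply: allroot; rewrite lerDl mulr_ge0 ?ler0n ?ltW //=; lra.
have rs_uniq : uniq rs.
  rewrite map_inj_in_uniq ?iota_uniq // => k j; rewrite !mem_iota !add0n.
  move=> /andP[_ kN] /andP[_ jN] ekj.
  have [kN' jN'] : (k%:R : R) < N.+1%:R /\ (j%:R : R) < N.+1%:R by rewrite !ltr_nat.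
  have [k0 j0] : (0 : R) <= k%:R /\ (0 : R) <= j%:R by rewrite !ler0n.
  case: (ltngtP k j) => // [kj|jk]; exfalso; move: ekj; apply/eqP.
    have kj' : (k%:R : R) < j%:R by rewrite ltr_nat.
    by rewrite eq_sym; apply: expi_neq; apply/andP; split; nra.
  have jk' : (j%:R : R) < k%:R by rewrite ltr_nat.
  by apply: expi_neq; apply/andP; split; nra.
have := max_poly_roots P0 rs_root rs_uniq.
by rewrite size_map size_iota ltnNge leqnSn.
Qed.

End UnitCircle.

Lemma sqrD_eq1_addr_neq1 (R : realFieldType) (a b : R) :
  a ^+ 2 + b ^+ 2 = 1 -> a != 1 -> b != 1 -> a + b != 1.
Proof.
move=> ab1 a1 b1; apply/eqP => s1; have /eqP : a * b = 0 by nra.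
rewrite mulf_eq0 => /orP[/eqP a0|/eqP b0].
  by move: b1; rewrite -s1 a0 add0r eqxx.
by move: a1; rewrite -s1 b0 addr0 eqxx.
Qed.

Lemma continuous_gt0_between (R : realType) (f : R -> R) (a b c : R) :
    continuous f -> (forall t, a < t < b -> f t != 0) -> a < c < b -> 0 < f c ->
  forall t, a < t < b -> 0 < f t.
Proof.
move=> fc f0 /andP[ac cb] fc0 t /andP[a_t t_b]; rewrite ltNge; apply/negP => ft0.
have no_zero_between u v : a < u -> u <= v -> v < b ->
    Num.min (f u) (f v) <= 0 <= Num.max (f u) (f v) -> False.
  move=> au uv vb /(IVT uv (continuous_subspaceT fc))[r].
  rewrite in_itv /= => /andP[ur rv] fr0.
  have : a < r < b by rewrite (lt_le_trans au ur) (le_lt_trans rv vb).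
  by move/f0; rewrite fr0 eqxx.
have [tc|ct] := leP t c.
  by apply: (no_zero_between t c) => //; rewrite ge_min le_max ft0 (ltW fc0) orbT.
by apply: (no_zero_between c t) => //; rewrite ?(ltW ct) // ge_min le_max ft0 (ltW fc0) orbT.
Qed.

Section ZeroSymFilter.
Variables (R : realType) (p q : {poly R}).
Local Notation pc := (map_poly (real_complex R) p).
Local Notation qc := (map_poly (real_complex R) q).
Local Notation H := (ratf_eval p q).
Implicit Types (t : R) (w : R[i]).

Definition ratf_expi_re (t : R) : R := Re (H (expi t)).
Local Notation h := ratf_expi_re.

Lemma ratf_dom_conjc w : ratf_dom q w -> ratf_dom q w^*.
Proof. by rewrite /ratf_dom -conjc_horner conjc_eq0. Qed.

Lemma ratf_eval_conjc w : H w^* = (H w)^*.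
Proof. by rewrite /ratf_eval fmorph_div /= !conjc_horner. Qed.

Lemma ratf_expi_reN t : h (- t) = h t.
Proof. by rewrite /h -conjc_expi ratf_eval_conjc; case: (H (expi t)). Qed.

Hypothesis Hsym : zero_sym p q.

Lemma ratf_eval_expi_real t : ratf_dom q (expi t) -> H (expi t) = (h t)%:C.
Proof.
move=> dt; apply: conjc_eq_real; have [_ _ _ Hinv] := Hsym.
have einv := invc_unit_norm (expi_mul_conjc t).
have e0 : expi t != 0 by rewrite -normr_eq0 normc_expi oner_neq0.
by rewrite -ratf_eval_conjc -einv -Hinv // einv; apply: ratf_dom_conjc.
Qed.

Lemma ratf_expi_re_sqrD t : ratf_dom q (expi t) -> ratf_dom q (expi (t + pi)) ->
  h t ^+ 2 + h (t + pi) ^+ 2 = 1.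
Proof.
move=> dt dtpi; have [_ _ Hsq _] := Hsym.
apply: complexI; rewrite rmorphD !rmorphXn /= -!ratf_eval_expi_real //.
by rewrite expiDpi Hsq // -expiDpi.
Qed.

Lemma sqnormc_horner_le t : ratf_dom q (expi t) -> ratf_dom q (expi (t + pi)) ->
  sqnormc pc.[expi t] <= sqnormc qc.[expi t].
Proof.
move=> dt dtpi; have h2 := ratf_expi_re_sqrD dt dtpi.
have -> : pc.[expi t] = H (expi t) * qc.[expi t] by rewrite /ratf_eval divfK.
rewrite ratf_eval_expi_real // sqnormcM sqnormc_real ler_piMl ?sqnormc_ge0 //.
by rewrite -h2 lerDl sqr_ge0.
Qed.

Lemma ratf_dom_expi t : ratf_dom q (expi t).
Proof.
have [q0 pq_coprime _ _] := Hsym; apply/eqP => qt0.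
have pt0 : pc.[expi t] != 0.
  apply: (@coprimep_root _ qc); last by rewrite /root qt0.
  by rewrite coprimep_map coprimep_sym.
pose F s := sqnormc pc.[expi s] - sqnormc qc.[expi s].
have Fc : continuous F.
  by move=> s; apply: cvgB; apply: continuous_sqnormc_horner_expi.
have Ft : 0 < F t by rewrite /F qt0 /sqnormc /= expr0n addr0 subr0 sqnormc_gt0.
have [e e0 Fpos] : exists2 e : R, 0 < e & forall s, `|t - s| < e -> 0 < F s.
  have [e /= e0 He] := (nbhs_ballP _ _).1 (cvgr_gt (F t) (Fc t) 0 Ft).
  by exists e => // s ts; apply: He.
pose T := qc * (qc \Po (- 'X)).
have T0 : T != 0.
  rewrite mulf_neq0 ?map_poly_eq0 // -size_poly_eq0 size_comp_poly2.
    by rewrite size_poly_eq0 map_poly_eq0.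
  by rewrite size_polyN size_polyX.
have [s /andP[ts tse]] := poly_expi_nonroot t T0 e0.
rewrite /root hornerM horner_comp hornerN hornerX mulf_eq0 negb_or -expiDpi.
move=> /andP[ds dspi]; have := sqnormc_horner_le ds dspi.
have ts_e : `|t - s| < e by rewrite distrC ger0_norm ?subr_ge0 // ltrBlDl.
by have := Fpos s ts_e; rewrite /F subr_gt0 => /lt_geF ->.
Qed.

Lemma continuous_ratf_expi_re : continuous h.
Proof.
have [pRe pIm] := continuous_horner_expi pc.
have [qRe qIm] := continuous_horner_expi qc.
rewrite /h /ratf_eval => t; under eq_fun do rewrite Re_div.
apply: cvgM.
  by apply: cvgD; apply: cvgM; [exact: pRe | exact: qRe | exact: pIm | exact: qIm].
apply: cvgV; last exact: continuous_sqnormc_horner_expi.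
by rewrite gt_eqF // sqnormc_gt0 // ratf_dom_expi.
Qed.

End ZeroSymFilter.

Section PositiveOnCircle.
Variables (R : realType) (p q : {poly R}).
Hypothesis Hsym : zero_sym p q.
Hypothesis Hi : Num.sg (ratf_eval p q 'i) = 1.
Hypothesis Hone : forall z : R[i],
  (`|z| = 1 /\ ratf_dom q z /\ ratf_eval p q z = 1) <-> z = 1.
Local Notation h := (ratf_expi_re p q).
Local Notation dom_expi := (ratf_dom_expi Hsym).

Lemma ratf_expi_re_eq1 t : h t = 1 -> sin t = 0.
Proof.
move=> ht1; have e1 : expi t = 1.
  apply/Hone; split; first exact: normc_expi.
  by split; [exact: dom_expi | rewrite (ratf_eval_expi_real Hsym (dom_expi t)) ht1].
by have /= := congr1 Im e1.
Qed.

Lemma ratf_expi_re_sqrB t : h t ^+ 2 + h (t - pi) ^+ 2 = 1.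
Proof.
have := ratf_expi_re_sqrD Hsym (dom_expi (t - pi)) (dom_expi (t - pi + pi)).
by rewrite subrK addrC.
Qed.

Lemma ratf_expi_re_pihalf_gt0 : 0 < h (pi / 2).
Proof.
by rewrite -sg_realc_eq1 -(ratf_eval_expi_real Hsym (dom_expi _)) expi_pihalf Hi.
Qed.

Lemma ratf_expi_re_gt0 t : 0 < t < pi -> 0 < h t.
Proof.
pose f s := h s + h (s - pi) - 1.
have f_neq0 s : 0 < s < pi -> f s != 0.
  move=> s0pi; have sin_gt0 := sin_gt0_pi s0pi.
  rewrite subr_eq0 sqrD_eq1_addr_neq1 ?ratf_expi_re_sqrB //.
    by apply: contraTneq sin_gt0 => /ratf_expi_re_eq1 ->; rewrite ltxx.
  apply: contraTneq sin_gt0 => /ratf_expi_re_eq1 sinB0.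
  by rewrite -(subrK pi s) sinDpi sinB0 oppr0 ltxx.
have f_pihalf : 0 < f (pi / 2).
  have pihalfB : pi / 2 - pi = - (pi / 2) :> R.
    by rewrite {2}(splitr pi) opprD addrA subrr sub0r.
  have := ratf_expi_re_sqrB (pi / 2); have := ratf_expi_re_pihalf_gt0.
  by rewrite /f pihalfB ratf_expi_reN; nra.
have fc : continuous f.
  have hc := continuous_ratf_expi_re Hsym.
  move=> s; apply: cvgB; last exact: cvg_cst.
  apply: cvgD; first exact: hc.
  apply: continuous_comp; last exact: hc.
  by apply: cvgB; [exact: cvg_id | exact: cvg_cst].
have pihalf : 0 < (pi : R) / 2 < pi by have := pi_gt0 R; lra.
move=> t0pi; have := continuous_gt0_between fc f_neq0 pihalf f_pihalf t0pi.
have := ratf_expi_re_sqrB t; rewrite /f; nra.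
Qed.

End PositiveOnCircle.

Theorem proposition1 (R : realType) (p q : {poly R}) :
  zero_sym p q ->
  Num.sg (ratf_eval p q 'i%C) = 1 ->
  (forall z : R[i], (`|z| = 1 /\ ratf_dom q z /\ ratf_eval p q z = 1) <-> z = 1) ->
  forall xi : R, - pi < xi < pi -> 0 < ratf_eval p q (expi xi).
Proof.
move=> Hsym Hi Hone xi /andP[xi_gt xi_lt].
rewrite (ratf_eval_expi_real Hsym (ratf_dom_expi Hsym xi)) ltcR.
have [xi_lt0|xi_gt0|->] := ltrgtP xi 0.
- rewrite -ratf_expi_reN (ratf_expi_re_gt0 Hsym Hi Hone) //.
  by rewrite oppr_gt0 xi_lt0 ltrNl.
- by rewrite (ratf_expi_re_gt0 Hsym Hi Hone) // xi_gt0.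
- by rewrite /ratf_expi_re expi0 ((Hone 1).2 erefl).2.2 ltr01.
Qed.
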